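(* Let trees $T_1,\dots,T_t$ be fixed as described below and let $A_G$ be the assignment produced by the greedy procedure described below. Then $z(A_G)\ge \frac12\max\{z(A):A\in\mathcal{M}\}$, i.e. the bandwidth cost reduced by the greedy assignment of branch state nodes is at least one half of the cost reduced by an optimal assignment of branch state nodes.
   Context: Setting: a directed graph $G=(V,E)$ with edge costs $k_e\ge0$ and node capacities $b_u\in\mathbb{Z}_{\ge0}$; for $i=1,\dots,t$ a directed out-tree $T_i\subseteq G$ rooted at a source $s_i$ and containing a destination set $D_i$. Let $W_i$ be the set of branch nodes of $T_i$ (nodes other than $s_i$ with at least three incident edges in $T_i$) and $W=\bigcup_i W_i$. For $A_i\subseteq W_i$ define $c(T_i,A_i)=\sum_{x\in A_i\cup D_i}c(P_x)$, where $P_x$ is the path in $T_i$ from the nearest proper ancestor of $x$ in $A_i\cup\{s_i\}$ to $x$ and $c(P_x)$ is the sum of the edge costs on $P_x$. Let $N=\{1,\dots,t\}\times W$; a set $A\subseteq N$ is a feasible assignment if $(i,w)\in A$ implies $w\in W_i$ and, for each $w\in W$, $|\{i:(i,w)\in A\}|\le b_w$; $\mathcal{M}$ is the family of feasible assignments. For $A\in\mathcal{M}$ put $A_i=\{w:(i,w)\in A\}$, $c(\mathcal{T},A)=\sum_i c(T_i,A_i)$, and $z(A)=c(\mathcal{T},\varnothing)-c(\mathcal{T},A)$. Greedy procedure: start with $A=\varnothing$; while there exists $x\in N\setminus A$ with $A\cup\{x\}\in\mathcal{M}$, add to $A$ such an element $x$ maximizing $z(A\cup\{x\})$; $A_G$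 is the final set. *)

From mathcomp Require Import all_boot all_order all_algebra.
Set Implicit Arguments. Unset Strict Implicit. Unset Printing Implicit Defensive.
Import Order.TTheory GRing.Theory Num.Theory.
Local Open Scope ring_scope.

Section Trees.
Variable V : finType.

(* A directed tree is given by its edge set T : {set V * V} and its root s. *)
Definition trel (T : {set V * V}) : rel V := fun x y => (x, y) \in T.

Definition tnodes (T : {set V * V}) (s : V) : {set V} :=
  [set x | connect (trel T) s x].

Definition is_outtree (E : rel V) (T : {set V * V}) (s : V) : Prop :=
  [/\ forall e, e \in T -> E e.1 e.2,
      forall x, (x, s) \notin T,
      forall x x' y, (x, y) \in T -> (x', y) \in T -> x = x'
    & forall x y, (x, y) \in T -> connect (trel T) s x].

Definition tdeg (T : {set V * V}) (x : V) : nat :=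
  #|[set e in T | (e.1 == x) || (e.2 == x)]|.

Definition branch_nodes (T : {set V * V}) (s : V) : {set V} :=
  [set x in tnodes T s | (x != s) && (3 <= tdeg T x)%N].

Definition is_leaf (T : {set V * V}) (s x : V) : bool :=
  [&& x \in tnodes T s, x != s & [forall y, (x, y) \notin T]].

Variable R : numDomainType.
Variable k : V -> V -> R.

(* cost of the tree path from an ancestor a to x: the tree edges (u,v) with
   u a descendant of a (or a itself) and v an ancestor of x (or x itself) *)
Definition pcost (T : {set V * V}) (a x : V) : R :=
  \sum_(e in T | connect (trel T) a e.1 && connect (trel T) e.2 x) k e.1 e.2.

Definition pancestors (T : {set V * V}) (S : {set V}) (x : V) : {set V} :=
  [set a in S | connect (trel T) a x && (a != x)].

Definition nearest (T : {set V * V}) (S : {set V}) (x : V) : option V :=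
  [pick a in pancestors T S x |
     [forall c in pancestors T S x, connect (trel T) c a]].

Definition Pcost (T : {set V * V}) (s : V) (A : {set V}) (x : V) : R :=
  if nearest T (s |: A) x is Some a then pcost T a x else 0.

Definition tree_cost (T : {set V * V}) (s : V) (D A : {set V}) : R :=
  \sum_(x in A :|: D) Pcost T s A x.

End Trees.

Section Assignment.
Variables (R : numDomainType) (V : finType) (k : V -> V -> R) (b : V -> nat)
          (t : nat) (s : 'I_t -> V) (T : 'I_t -> {set V * V})
          (D : 'I_t -> {set V}).

Definition Wi (i : 'I_t) : {set V} := branch_nodes (T i) (s i).
Definition Wall : {set V} := \bigcup_(i < t) Wi i.

Definition Nset : {set 'I_t * V} := [set p | p.2 \in Wall].

Definition feasible (A : {set 'I_t * V}) : bool :=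
  [forall p in A, p.2 \in Wi p.1] &&
  [forall w in Wall, #|[set i | (i, w) \in A]| <= b w]%N.

Definition Ai (A : {set 'I_t * V}) (i : 'I_t) : {set V} := [set w | (i, w) \in A].

Definition total_cost (A : {set 'I_t * V}) : R :=
  \sum_(i < t) tree_cost k (T i) (s i) (D i) (Ai A i).

Definition z (A : {set 'I_t * V}) : R := total_cost set0 - total_cost A.

(* [greedy_from A xs AG]: starting from the current set A, the greedy
   procedure successively adds the elements of xs (each one an admissible
   choice of the greedy rule, ties broken arbitrarily) and stops at AG
   when no element can be added any more. *)
Fixpoint greedy_from (A : {set 'I_t * V}) (xs : seq ('I_t * V))
  (AG : {set 'I_t * V}) : Prop :=
  match xs with
  | [::] => AG = A /\
      (forall y, y \in Nset -> y \notin A -> ~~ feasible (y |: A))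
  | x :: xs' =>
      [/\ x \in Nset, x \notin A, feasible (x |: A),
          (forall y, y \in Nset -> y \notin A -> feasible (y |: A) ->
                     z (y |: A) <= z (x |: A))
        & greedy_from (x |: A) xs' AG]
  end.

Definition greedy_output (AG : {set 'I_t * V}) : Prop :=
  exists xs, greedy_from set0 xs AG.

End Assignment.

From Pilot Require Import Defs.
From mathcomp Require Import all_boot all_order all_algebra.
From mathcomp Require Import zify lra.
Import Order.TTheory GRing.Theory Num.Theory.
Set Implicit Arguments. Unset Strict Implicit. Unset Printing Implicit Defensive.

(* For one tree, c(T, A) is the sum over the tree edges (u, v) of
   k(u, v) times the number of x in A ∪ D whose path P_x uses (u, v); this
   happens exactly when v is an ancestor of x and no node of A lies strictly
   between v and x, i.e. when x is in [through v A]. Adding a branch node w to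
   A removes from [through v A] the nodes captured strictly below w and adds at
   most w itself. Since a destination lies strictly below w, w captures a node
   whenever it is exposed itself, so z is monotone; and enlarging A only
   shrinks the set of captured nodes (injectively), so z is submodular.
   Feasible assignments form a partition matroid with capacity b_w on the
   pairs (i, w), and the classical exchange argument charges every element of
   an optimum A to a distinct greedy step whose gain dominates its marginal
   gain at A_G: hence z(A) <= z(A_G) + sum_{o in A} (z(A_G + o) - z(A_G))
   <= 2 z(A_G). *)

Section Arborescence.
Variables (V : finType) (T : {set V * V}) (s : V).
Hypothesis root_indeg0 : forall x, (x, s) \notin T.
Hypothesis indeg_le1 : forall x x' y, (x, y) \in T -> (x', y) \in T -> x = x'.

Local Notation anc := (connect (trel T)).

Definition sanc x y := anc x y && (x != y).

Lemma anc_last_edge a y : anc a y -> a != y -> exists2 p, (p, y) \in T & anc a p.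
Proof.
move/connectP=> [pth Hp ->{y}]; case/lastP: pth Hp => [|q y] /=.
  by rewrite eqxx.
rewrite rcons_path last_rcons => /andP[Hq Hy] _.
by exists (last a q) => //; apply/connectP; exists q.
Qed.

Lemma anc_parent a y p : anc a y -> a != y -> (p, y) \in T -> anc a p.
Proof.
move=> Hay nay Hp; have [p' Hp' Hap'] := anc_last_edge Hay nay.
by rewrite (indeg_le1 Hp Hp').
Qed.

Lemma anc_total a b x : anc a x -> anc b x -> anc a b || anc b a.
Proof.
move/connectP=> [pth Hp ->]; elim/last_ind: pth a b Hp => [|q y IH] a b /=.
  by move=> _ ->; rewrite orbT.
rewrite rcons_path last_rcons => /andP[Hq Hy] Hb.
have [->|nby] := eqVneq b y.
  by apply/orP; left; apply/connectP; exists (rcons q y); rewrite ?rcons_path ?Hq ?last_rcons.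
exact: IH _ _ Hq (anc_parent Hb nby Hy).
Qed.

Lemma anc_root a : anc a s -> a = s.
Proof.
move=> Has; apply/eqP/negPn/negP => nas.
by have [p] := anc_last_edge Has nas; rewrite (negbTE (root_indeg0 p)).
Qed.

Lemma anc_from_root a x : anc s x -> anc a x -> anc s a.
Proof.
by move=> Hsx Hax; case/orP: (anc_total Hsx Hax) => // /anc_root ->.
Qed.

Lemma tree_edge_acyclic u v : anc s v -> (u, v) \in T -> ~~ anc v u.
Proof.
move/connectP=> [pth Hp ->]; elim/last_ind: pth u Hp => [|q y IH] u /=.
  by rewrite (negbTE (root_indeg0 u)).
rewrite rcons_path last_rcons => /andP[Hq Hy] Hu; apply/negP => Hyu.
have Eu := indeg_le1 Hu Hy; subst u.
have [Ey|ny] := eqVneq y (last s q).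
  by move: Hy (IH y Hq); rewrite -Ey connect0 => Hyy /(_ Hyy).
have [p Hp Hyp] := anc_last_edge Hyu ny.
by move: (IH _ Hq Hp); rewrite (connect_trans (connect1 Hy) Hyp).
Qed.

Lemma anc_antisym a b : anc s a -> anc a b -> anc b a -> a = b.
Proof.
move=> Hsa Hab Hba; apply/eqP/negPn/negP => nab.
have [p Hp Hap] := anc_last_edge Hab nab.
by move: (tree_edge_acyclic (connect_trans Hsa Hab) Hp); rewrite (connect_trans Hba Hap).
Qed.

Lemma tree_edge_neq u v : anc s u -> (u, v) \in T -> u != v.
Proof.
move=> Hsu Huv; apply: contraTneq (tree_edge_acyclic (connect_trans Hsu (connect1 Huv)) Huv).
by move=> ->; rewrite connect0.
Qed.

Definition depth x := #|[set a | anc a x]|.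

Lemma depth_lt a b : anc s a -> sanc a b -> (depth a < depth b)%N.
Proof.
move=> Hsa /andP[Hab nab]; apply: proper_card; apply/properP; split.
  by apply/subsetP => c; rewrite !inE => Hca; apply: connect_trans Hca Hab.
exists b; rewrite !inE ?connect0 //.
by apply: contra nab => Hba; apply/eqP/anc_antisym.
Qed.

Lemma tdeg_le1 w : [forall c, (w, c) \notin T] -> (tdeg T w <= 1)%N.
Proof.
move=> /forallP leaf_w; apply/card_le1_eqP => [[e1 e2] [e1' e2']].
have head_w f1 f2 : (f1, f2) \in T -> (f1 == w) || (f2 == w) -> f2 = w.
  by move=> Hf /orP[/eqP Ef|/eqP //]; rewrite Ef (negbTE (leaf_w f2)) in Hf.
rewrite !inE /= => /andP[He /(head_w _ _ He) Ee] /andP[He' /(head_w _ _ He') Ee'].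
by subst e2 e2'; rewrite (indeg_le1 He He').
Qed.

Lemma branch_leaf_below w : w \in branch_nodes T s ->
  exists2 d, is_leaf T s d & sanc w d.
Proof.
rewrite !inE => /andP[Hsw /andP[nws deg_w]].
have [c Hc] : exists c, (w, c) \in T.
  apply/existsP; apply: contraTT deg_w; rewrite negb_exists => /tdeg_le1.
  by rewrite -ltnNge => /leq_ltn_trans; apply.
have Pc : sanc w c by rewrite /sanc (connect1 Hc) (tree_edge_neq Hsw Hc).
case: (arg_maxnP depth Pc) => d /[dup] Hwd /andP[Hwd' nwd] dmax.
have Hsd := connect_trans Hsw Hwd'.
exists d => //; apply/and3P; split; first by rewrite inE.
  by apply: contraNneq nws => Eds; apply/eqP/anc_root; rewrite -Eds.
apply/forallP => y; apply/negP => Hdy.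
have Py : sanc w y.
  rewrite /sanc (connect_trans Hwd' (connect1 Hdy)).
  by apply: contraTneq Hwd' => Ewy; rewrite Ewy in Hsw *; apply: tree_edge_acyclic Hsw Hdy.
have Hdy' : sanc d y by rewrite /sanc (connect1 Hdy) (tree_edge_neq Hsd Hdy).
have := depth_lt Hsd Hdy'.
by rewrite ltnNge (dmax y Py : (depth y <= depth d)%N).
Qed.

Lemma nearest_below (S Z : {set V}) u d : anc s u -> sanc u d -> d \in Z ->
  S \subset Z ->
  exists2 z, [/\ z \in Z, sanc u z & anc z d] &
    forall y, y \in S -> sanc u y -> ~~ sanc y z.
Proof.
move=> Hsu Hud Hd HSZ.
pose P x := [&& x \in Z, sanc u x & anc x d].
have Pd : P d by rewrite /P Hd Hud connect0.
case: (arg_minnP depth Pd) => z /and3P[Hz Huz Hzd] zmin.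
exists z => // y Hy Huy; apply/negP => Hyz.
have Py : P y by rewrite /P (subsetP HSZ _ Hy) Huy (connect_trans (proj1 (andP Hyz)) Hzd).
have := depth_lt (connect_trans Hsu (proj1 (andP Huy))) Hyz.
by rewrite ltnNge (zmin y Py : (depth z <= depth y)%N).
Qed.

Variable D : {set V}.

Definition shadowed v (S : {set V}) x := [exists y in S, anc v y && sanc y x].
Definition exposed v (S : {set V}) x := anc v x && ~~ shadowed v S x.
Definition through v (S : {set V}) := [set x in S :|: D | exposed v S x].
Definition captured v (S : {set V}) w := [set x in through v S | anc v w && sanc w x].
Definition above_dest w := anc s w && [exists d in D, sanc w d].

Lemma in_captured v (S : {set V}) w x :
  (x \in captured v S w) = (x \in through v S) && (anc v w && sanc w x).
Proof. by rewrite inE. Qed.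

Lemma shadowed_setU1 v (S : {set V}) w x :
  shadowed v (w |: S) x = (anc v w && sanc w x) || shadowed v S x.
Proof.
apply/existsP/orP => [[y /andP[]]|[Hw|/existsP[y /andP[Hy Hyx]]]].
- by rewrite in_setU1 => /orP[/eqP->|Hy] Hyx; [left|right; apply/existsP; exists y; rewrite Hy].
- by exists w; rewrite setU11.
- by exists y; rewrite in_setU1 Hy orbT.
Qed.

Lemma shadowed_subset v (S1 S2 : {set V}) x :
  S1 \subset S2 -> shadowed v S1 x -> shadowed v S2 x.
Proof.
move=> HS /existsP[y /andP[Hy Hyx]]; apply/existsP; exists y.
by rewrite (subsetP HS _ Hy).
Qed.

Lemma exposed_subset v (S1 S2 : {set V}) x :
  S1 \subset S2 -> exposed v S2 x -> exposed v S1 x.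
Proof.
by move=> HS /andP[Hvx nsh]; rewrite /exposed Hvx; apply: contra nsh; apply: shadowed_subset.
Qed.

Lemma card_through_setU1 v (S : {set V}) w : w \notin S ->
  (#|through v S| + ((w \notin D) && exposed v S w) =
   #|through v (w |: S)| + #|captured v S w|)%N.
Proof.
move=> nwS.
have through_rest : through v (w |: S) :\ w = (through v S :\ w) :\: captured v S w.
  apply/setP => x; rewrite !inE /exposed shadowed_setU1.
  have [->|nxw] /= := eqVneq x w; first by rewrite andbF.
  by case: (x \in S); case: (x \in D); case: (anc v x); case: (anc v w);
     case: (sanc w x); case: (shadowed v S x).
have captured_sub : captured v S w \subset through v S :\ w.
  apply/subsetP => x; rewrite !inE => /andP[Hx /and3P[_ _ nwx]].
  by rewrite eq_sym nwx.
have w_through : (w \in through v S) = (w \in D) && exposed v S w.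
  by rewrite inE in_setU (negbTE nwS).
have w_through1 : (w \in through v (w |: S)) = exposed v S w.
  by rewrite inE in_setU in_setU1 eqxx /exposed shadowed_setU1 /sanc eqxx !andbF.
rewrite (cardsD1 w (through v S)) (cardsD1 w (through v (w |: S))) through_rest.
rewrite (cardsD (through v S :\ w)) (setIidPr captured_sub) w_through w_through1.
have := subset_leq_card captured_sub.
by case: (exposed v S w); case: (w \in D); rewrite /=; lia.
Qed.

Lemma through_subset v (S1 S2 : {set V}) x : S1 \subset S2 ->
  x \in through v S2 -> x \in S1 :|: D -> x \in through v S1.
Proof.
by move=> HS; rewrite !inE => /andP[_ /(exposed_subset HS) ->] ->.
Qed.

Lemma through_below v (S : {set V}) u : above_dest u -> u \notin S ->
  exposed v S u -> exists2 z, z \in through v S & sanc u z.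
Proof.
move=> /andP[Hsu /existsP[d /andP[Hd Hud]]] nuS /andP[Hvu nsh].
have HdSD : d \in S :|: D by rewrite inE Hd orbT.
have [z [Hz Huz _] zfirst] := nearest_below Hsu Hud HdSD (subsetUl S D).
exists z => //; rewrite inE Hz /exposed (connect_trans Hvu (proj1 (andP Huz))) /=.
apply/existsP => -[y /and3P[Hy Hvy /[dup] Hyz /andP[Hyz' _]]].
have nyu : y != u by apply: contraNneq nuS => <-.
case/orP: (anc_total Hyz' (proj1 (andP Huz))) => [Hyu|Huy].
- by move: nsh; apply/negP/negPn/existsP; exists y; rewrite Hy Hvy /sanc Hyu nyu.
- have Huy' : sanc u y by rewrite /sanc Huy eq_sym nyu.
  by move: (zfirst y Hy Huy'); rewrite Hyz.
Qed.

Lemma captured_gt0 v (S : {set V}) w : above_dest w -> w \notin S ->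
  exposed v S w -> (0 < #|captured v S w|)%N.
Proof.
move=> Hw nwS Hexp; have [z Hz Hwz] := through_below Hw nwS Hexp.
by apply/card_gt0P; exists z; rewrite inE Hz Hwz (proj1 (andP Hexp)).
Qed.

Lemma exposed_of_captured v (S : {set V}) w : anc s w ->
  (0 < #|captured v S w|)%N -> exposed v S w.
Proof.
move=> Hsw /card_gt0P[x]; rewrite inE => /andP[Hthr /andP[Hvw /andP[Hwx nwx]]].
move: Hthr; rewrite inE => /andP[_ /andP[_ nsh]]; rewrite /exposed Hvw /=.
apply: contra nsh => /existsP[y /and3P[Hy Hvy /andP[Hyw nyw]]].
apply/existsP; exists y; rewrite Hy Hvy /sanc (connect_trans Hyw Hwx) /=.
by apply: contraNneq nwx => Eyx; apply/eqP/anc_antisym; rewrite // -Eyx.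
Qed.

Lemma captured_descend v (S1 S2 : {set V}) w x : S1 \subset S2 ->
  {in S2, forall y, above_dest y} -> x \in captured v S2 w ->
  exists2 z, z \in captured v S1 w & anc x z.
Proof.
move=> HS HS2 Hx; move: (Hx); rewrite inE => /andP[Hthr /andP[Hvw /andP[Hwx nwx]]].
case HxSD : (x \in S1 :|: D).
  by exists x; rewrite ?connect0 // inE (through_subset HS Hthr HxSD) Hvw /sanc Hwx.
move/negbT: HxSD; rewrite inE negb_or => /andP[nxS1 nxD].
move: (Hthr); rewrite !inE (negbTE nxD) orbF => /andP[HxS2 /(exposed_subset HS) Hexp].
have [z Hz /andP[Hxz nxz]] := through_below (HS2 x HxS2) nxS1 Hexp.
exists z => //; rewrite inE Hz Hvw /sanc (connect_trans Hwx Hxz) /=.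
apply: contraNneq nwx => Ewz; apply/eqP/anc_antisym => //.
- by case/andP: (HS2 x HxS2) => Hsx _; apply: anc_from_root Hsx Hwx.
- by rewrite Ewz.
Qed.

Lemma card_captured_subset v (S1 S2 : {set V}) w : S1 \subset S2 -> anc s w ->
  {in S2, forall y, above_dest y} -> (#|captured v S2 w| <= #|captured v S1 w|)%N.
Proof.
move=> HS Hsw HS2.
(* Two nodes with the same image under phi are comparable, and the upper one
   then lies in D and is its own image. *)
pose phi x := if x \in captured v S1 w then x
              else odflt x [pick z in captured v S1 w | anc x z].
have phi_spec x : x \in captured v S2 w -> phi x \in captured v S1 w /\ anc x (phi x).
  move=> Hx; rewrite /phi; case: ifP => [-> |_]; first by rewrite connect0.
  have [z Hz Hxz] := captured_descend HS HS2 Hx.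
  by case: pickP => [z' /andP[]|/(_ z)] //=; rewrite Hz Hxz.
have phi_anc_inj a b : a \in captured v S2 w -> b \in captured v S2 w ->
    phi a = phi b -> anc a b -> a = b.
  move=> Ha Hb Eab Hab; apply/eqP/negPn/negP => nab.
  move: (Ha) (Hb); rewrite !inE => /andP[/andP[HaSD /andP[Hva _]] /andP[Hvw /andP[Hwa _]]].
  move=> /andP[/andP[_ /andP[_ nshb]] _].
  have naS2 : a \notin S2.
    by apply: contra nshb => HaS2; apply/existsP; exists a; rewrite HaS2 Hva /sanc Hab.
  have HaSD1 : a \in S1 :|: D by move: HaSD; rewrite !inE (negbTE naS2) /= => ->; rewrite orbT.
  have Ha1 : a \in captured v S1 w.
    by move: Ha; rewrite !in_captured => /andP[Hthr ->]; rewrite (through_subset HS Hthr HaSD1).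
  have [_ Hb_phi] := phi_spec b Hb.
  rewrite -Eab /phi Ha1 in Hb_phi.
  by move/eqP: nab; apply; apply: anc_antisym Hab Hb_phi; apply: connect_trans Hsw Hwa.
have phi_inj : {in captured v S2 w &, injective phi}.
  move=> a b Ha Hb Eab; have [_ Ha_phi] := phi_spec a Ha; have [_ Hb_phi] := phi_spec b Hb.
  rewrite Eab in Ha_phi.
  case/orP: (anc_total Ha_phi Hb_phi) => Hab; first exact: phi_anc_inj.
  by apply/esym/phi_anc_inj.
rewrite -(card_in_imset phi_inj); apply: subset_leq_card.
by apply/subsetP => _ /imsetP[x Hx ->]; case: (phi_spec x Hx).
Qed.

Lemma card_through_setU1_le v (S : {set V}) w : above_dest w ->
  (#|through v (w |: S)| <= #|through v S|)%N.
Proof.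
move=> Hw; have [HwS|nwS] := boolP (w \in S).
  by rewrite (setUidPr _) // sub1set.
have := card_through_setU1 v nwS; have [Hexp|_] := boolP (exposed v S w).
  by have := captured_gt0 Hw nwS Hexp; case: (w \notin D) => /=; lia.
by rewrite andbF; lia.
Qed.

Lemma card_through_submod v (S1 S2 : {set V}) w : S1 \subset S2 ->
  above_dest w -> w \notin S2 -> {in S2, forall y, above_dest y} ->
  (#|through v S2| + #|through v (w |: S1)| <=
   #|through v S1| + #|through v (w |: S2)|)%N.
Proof.
move=> HS Hw nwS2 HS2; have nwS1 : w \notin S1 by apply: contra nwS2; apply: (subsetP HS).
have Hsw : anc s w by case/andP: Hw.
have := card_through_setU1 v nwS1; have := card_through_setU1 v nwS2.
have := card_captured_subset v HS Hsw HS2; have := card_through_setU1_le v S1 Hw.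
have [Hexp2|nexp2] := boolP (exposed v S2 w).
  by rewrite (exposed_subset HS Hexp2); case: (w \notin D) => /=; lia.
have captured0 : #|captured v S2 w| = 0%N.
  by apply/eqP; rewrite -leqn0 leqNgt; apply: contra nexp2; apply: exposed_of_captured.
by rewrite captured0 andbF; lia.
Qed.

Hypothesis edge_reachable : forall x y, (x, y) \in T -> anc s x.

Lemma nearest_some (P : {set V}) x : s \in P -> anc s x -> x != s ->
  exists a, nearest T P x = Some a.
Proof.
move=> HsP Hsx nxs; rewrite /nearest; case: pickP => [a _|none]; first by exists a.
have Ps : s \in pancestors T P x by rewrite inE HsP Hsx eq_sym nxs.
case: (arg_maxnP depth Ps) => a Ha amax.
have {}Ha : a \in pancestors T P x := Ha.
move: (none a) => /=; rewrite Ha /=.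
move/negbT/negP; elim; apply/forall_inP => c Hc.
move: (Ha) (Hc); rewrite !inE => /and3P[_ Hax _] /and3P[_ Hcx _].
case/orP: (anc_total Hcx Hax) => // Hac; have [->|nac] := eqVneq a c; first exact: connect0.
have Hac' : sanc a c by rewrite /sanc Hac nac.
have := depth_lt (anc_from_root Hsx Hax) Hac'.
by rewrite ltnNge (amax c Hc : (depth c <= depth a)%N).
Qed.

Lemma nearest_edge (S : {set V}) x a u v : nearest T (s |: S) x = Some a ->
  (u, v) \in T -> x \in S :|: D -> (anc a u && anc v x) = (x \in through v S).
Proof.
rewrite /nearest; case: pickP => // a' /andP[Ha Hnear] [Ea] Huv HxSD; subst a'.
rewrite !inE in Ha; case/and3P: Ha => HaS Hax nax.
have Hsv := connect_trans (edge_reachable Huv) (connect1 Huv).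
have nvs : v != s by apply: contraNneq (root_indeg0 u) => <-.
rewrite inE HxSD /exposed /=; apply/andP/andP => [[Hau Hvx]|[Hvx nsh]].
  split=> //; apply/existsP => -[y /and3P[Hy Hvy /andP[Hyx nyx]]].
  have Hya : anc y a by apply: (forall_inP Hnear); rewrite !inE Hy orbT Hyx nyx.
  by move: (tree_edge_acyclic Hsv Huv); rewrite (connect_trans (connect_trans Hvy Hya) Hau).
have nva : ~~ anc v a.
  apply/negP => Hva; case/orP: HaS => [/eqP Eas|HaS].
    by rewrite Eas in Hva; rewrite (anc_root Hva) eqxx in nvs.
  by move: nsh; apply/negP/negPn/existsP; exists a; rewrite HaS Hva /sanc Hax nax.
case/orP: (anc_total Hax Hvx) => [Hav|Hva]; last by rewrite Hva in nva.
split=> //; apply: anc_parent Hav _ Huv.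
by apply: contraNneq nva => ->; apply: connect0.
Qed.

Lemma through_nearest (S : {set V}) x v : (exists u, (u, v) \in T) ->
  x \in through v S -> exists a, nearest T (s |: S) x = Some a.
Proof.
move=> [u Huv]; rewrite !inE => /andP[_ /andP[Hvx _]].
have Hsv := connect_trans (edge_reachable Huv) (connect1 Huv).
apply: nearest_some (setU11 s S) (connect_trans Hsv Hvx) _.
by apply: contraTneq Hvx => ->; apply: contraNN (root_indeg0 u) => /anc_root <-.
Qed.

Hypothesis leaf_dest : forall x, is_leaf T s x -> x \in D.

Lemma branch_above_dest w : w \in branch_nodes T s -> above_dest w.
Proof.
move=> Hw; have [d /leaf_dest Hd Hwd] := branch_leaf_below Hw.
move: Hw; rewrite !inE => /andP[Hsw _].
by rewrite /above_dest Hsw; apply/existsP; exists d; rewrite Hd.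
Qed.

Local Open Scope ring_scope.
Variables (R : numDomainType) (k : V -> V -> R).

Lemma Pcost_through (S : {set V}) x : x \in S :|: D ->
  Pcost k T s S x = \sum_(e in T | x \in through e.2 S) k e.1 e.2.
Proof.
move=> HxSD; rewrite /Pcost; case Enear: nearest => [a|].
  by apply: eq_bigl => -[u v] /=; case Huv: ((u, v) \in T); rewrite //= (nearest_edge Enear).
rewrite big_pred0 // => -[u v]; apply/andP => -[Huv Hx].
by have [a] := through_nearest (ex_intro _ u Huv) Hx; rewrite Enear.
Qed.

Lemma tree_cost_through (S : {set V}) :
  tree_cost k T s D S = \sum_(e in T) k e.1 e.2 *+ #|through e.2 S|.
Proof.
rewrite /tree_cost (eq_bigr _ (@Pcost_through S)).
rewrite (exchange_big_dep (mem T)) => [|x e _ /andP[] //].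
apply: eq_bigr => e He; rewrite -sumr_const; apply: eq_bigl => x.
by rewrite (He : e \in T) /= andb_idl // [in X in X -> _]inE => /andP[].
Qed.

Hypothesis k_ge0 : forall e, e \in T -> 0 <= k e.1 e.2.

Lemma tree_cost_setU1_le (S : {set V}) w : w \in branch_nodes T s ->
  tree_cost k T s D (w |: S) <= tree_cost k T s D S.
Proof.
move=> /branch_above_dest Hw; rewrite !tree_cost_through; apply: ler_sum => e He.
by apply/ler_wpMn2l; [exact: k_ge0 | exact: card_through_setU1_le].
Qed.

Lemma tree_cost_submod (S1 S2 : {set V}) w : S1 \subset S2 ->
  S2 \subset branch_nodes T s -> w \in branch_nodes T s -> w \notin S2 ->
  tree_cost k T s D S2 - tree_cost k T s D (w |: S2) <=
  tree_cost k T s D S1 - tree_cost k T s D (w |: S1).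
Proof.
move=> HS HS2 /branch_above_dest Hw nwS2.
have HS2' : {in S2, forall y, above_dest y}.
  by move=> y /(subsetP HS2) /branch_above_dest.
rewrite !tree_cost_through -!sumrB; apply: ler_sum => e He.
rewrite lerBlDr addrAC lerBrDl -!mulrnDr; apply/ler_wpMn2l; first exact: k_ge0.
by rewrite addnC; apply: card_through_submod.
Qed.

End Arborescence.

Local Open Scope ring_scope.

Section Assignment.
Variables (R : realDomainType) (V : finType) (E : rel V) (k : V -> V -> R)
  (b : V -> nat) (t : nat) (s : 'I_t -> V) (T : 'I_t -> {set V * V})
  (D : 'I_t -> {set V}).
Hypothesis k_ge0 : forall u v, E u v -> 0 <= k u v.
Hypothesis outtree : forall i, is_outtree E (T i) (s i).
Hypothesis leaf_dest : forall i x, is_leaf (T i) (s i) x -> x \in D i.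

Local Notation z' := (z k s T D).
Local Notation tree_cost_at i S := (tree_cost k (T i) (s i) (D i) S).

Definition admissible (p : 'I_t * V) := p.2 \in Wi s T p.1.
Definition all_admissible (A : {set 'I_t * V}) := [forall p in A, admissible p].
Definition load (A : {set 'I_t * V}) w := #|[set i | (i, w) \in A]|.
Definition gain (A : {set 'I_t * V}) y := z' (y |: A) - z' A.
Definition greedy_choice (G : {set 'I_t * V}) x :=
  forall y, y \in Nset s T -> y \notin G -> feasible b s T (y |: G) ->
    z' (y |: G) <= z' (x |: G).

Lemma Ai_setU1 (A : {set 'I_t * V}) y i :
  Ai (y |: A) i = if i == y.1 then y.2 |: Ai A i else Ai A i.
Proof.
case: y => i0 w0 /=; apply/setP => w.
by case: eqVneq => [->|ne]; rewrite !inE xpair_eqE ?eqxx ?(negbTE ne).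
Qed.

Lemma gain_tree_cost (A : {set 'I_t * V}) y :
  gain A y = tree_cost_at y.1 (Ai A y.1) - tree_cost_at y.1 (y.2 |: Ai A y.1).
Proof.
have other_trees : \sum_(i < t | i != y.1) tree_cost_at i (Ai (y |: A) i) =
    \sum_(i < t | i != y.1) tree_cost_at i (Ai A i).
  by apply: eq_bigr => i /negbTE ne; rewrite Ai_setU1 ne.
have -> : gain A y = total_cost k s T D A - total_cost k s T D (y |: A).
  by rewrite /gain /Defs.z; lra.
rewrite /total_cost (bigD1 y.1) //= [X in _ - X](bigD1 y.1) //=.
rewrite other_trees Ai_setU1 eqxx; lra.
Qed.

Lemma gain_ge0 (A : {set 'I_t * V}) y : admissible y -> 0 <= gain A y.
Proof.
case: (outtree y.1) => HE root_indeg0 indeg_le1 edge_reachable Hy.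
rewrite gain_tree_cost subr_ge0.
apply: (tree_cost_setU1_le root_indeg0 indeg_le1 edge_reachable (@leaf_dest y.1)) Hy.
by move=> e /HE; apply: k_ge0.
Qed.

Lemma gain_submod (X Y : {set 'I_t * V}) y : X \subset Y -> all_admissible Y ->
  admissible y -> y \notin Y -> gain Y y <= gain X y.
Proof.
case: (outtree y.1) => HE root_indeg0 indeg_le1 edge_reachable HXY HY Hy nyY.
rewrite !gain_tree_cost.
apply: (tree_cost_submod root_indeg0 indeg_le1 edge_reachable (@leaf_dest y.1)) => //.
- by move=> e /HE; apply: k_ge0.
- by apply/subsetP => w; rewrite !inE => /(subsetP HXY).
- by apply/subsetP => w; rewrite inE => Hw; apply: (forall_inP HY (y.1, w)).
- by rewrite inE -surjective_pairing.
Qed.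

Lemma z_setU_seq (X : {set 'I_t * V}) l : all admissible l -> z' X <= z' (X :|: [set:: l]).
Proof.
elim: l => [|p l IH] /=; first by rewrite set_nil setU0.
move=> /andP[Hp Hl]; rewrite set_cons setUCA.
by apply: le_trans (IH Hl) _; rewrite -subr_ge0 gain_ge0.
Qed.

Lemma all_admissible_setU_seq (X : {set 'I_t * V}) l : all_admissible X ->
  all admissible l -> all_admissible (X :|: [set:: l]).
Proof.
move=> HX Hl; apply/forall_inP => p; rewrite in_setU inE => /orP[Hp|Hp].
  exact: (forall_inP HX).
exact: (allP Hl).
Qed.

Lemma z_setU_seq_le (X : {set 'I_t * V}) l : all_admissible X -> all admissible l ->
  z' (X :|: [set:: l]) <= z' X + \sum_(o <- l) gain X o.
Proof.
move=> HX; elim: l => [|o l IH] /=; first by rewrite set_nil setU0 big_nil addr0.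
move=> /andP[Ho Hl]; rewrite set_cons setUCA big_cons.
have := IH Hl; have [HoU|noU] := boolP (o \in X :|: [set:: l]).
  by rewrite (setUidPr (_ : [set o] \subset _)) ?sub1set //; have := gain_ge0 X Ho; lra.
have := gain_submod (subsetUl X [set:: l]) (all_admissible_setU_seq HX Hl) Ho noU.
by rewrite /gain; lra.
Qed.

Lemma admissible_Wall p : admissible p -> p.2 \in Wall s T.
Proof. by move=> Hp; apply/bigcupP; exists p.1. Qed.

Lemma load0 w : load set0 w = 0%N.
Proof. by apply/eqP; rewrite cards_eq0; apply/eqP/setP => i; rewrite !inE. Qed.

Lemma load_setU1 (A : {set 'I_t * V}) x w : x \notin A ->
  load (x |: A) w = (load A w + (x.2 == w))%N.
Proof.
case: x => i0 w0 /= nxA; rewrite /load; have [<-|ne] := eqVneq w0 w.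
  have -> : [set i | (i, w0) \in (i0, w0) |: A] = i0 |: [set i | (i, w0) \in A].
    by apply/setP => i; rewrite !inE xpair_eqE eqxx andbT.
  by rewrite cardsU1 inE (negbTE nxA) addnC.
have -> : [set i | (i, w) \in (i0, w0) |: A] = [set i | (i, w) \in A].
  by apply/setP => i; rewrite !inE xpair_eqE (eq_sym w w0) (negbTE ne) andbF.
by rewrite addn0.
Qed.

Lemma load_setD1 (A : {set 'I_t * V}) o w : o \in A ->
  load A w = (load (A :\ o) w + (o.2 == w))%N.
Proof. by move=> Ho; rewrite -{1}(setD1K Ho) load_setU1 // setD11. Qed.

Lemma feasible_load (A : {set 'I_t * V}) w : feasible b s T A -> (load A w <= b w)%N.
Proof.
case/andP=> Hadm Hcap; have [Hw|nw] := boolP (w \in Wall s T).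
  exact: (forall_inP Hcap).
suff -> : load A w = 0%N by [].
apply/eqP; rewrite cards_eq0; apply/eqP/setP => i; rewrite !inE.
by apply: contraNF nw => /(forall_inP Hadm)/admissible_Wall.
Qed.

Lemma feasible0 : feasible b s T set0.
Proof.
apply/andP; split; first by apply/forall_inP => p; rewrite inE.
by apply/forall_inP => w _; rewrite -/(load set0 w) load0.
Qed.

Lemma feasible_setU1 (A : {set 'I_t * V}) o : feasible b s T A -> admissible o ->
  o \notin A -> (load A o.2 < b o.2)%N -> feasible b s T (o |: A).
Proof.
case/andP=> Hadm Hcap Ho noA Hlt; apply/andP; split.
  by apply/forall_inP => p; rewrite in_setU1 => /orP[/eqP->//|]; apply: (forall_inP Hadm).
apply/forall_inP => w Hw; rewrite -/(load _ w) load_setU1 //.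
by case: eqVneq => [<-|_]; rewrite ?addn1 ?addn0 //; apply: (forall_inP Hcap).
Qed.

Lemma feasible_setU1_load (A : {set 'I_t * V}) x : x \notin A ->
  feasible b s T (x |: A) -> (load A x.2 < b x.2)%N.
Proof. by move=> nxA /(feasible_load x.2); rewrite load_setU1 // eqxx addn1. Qed.

Lemma load_gt0 (A : {set 'I_t * V}) w : (0 < load A w)%N -> exists2 o, o \in A & o.2 = w.
Proof. by case/card_gt0P => i; rewrite inE => Hi; exists (i, w). Qed.

Lemma greedy_from_feasible G xs AG : greedy_from k b s T D G xs AG ->
  feasible b s T G -> G \subset AG /\ feasible b s T AG.
Proof.
elim: xs G => [|x xs IH] G /=; first by case=> -> _.
case=> _ _ Hfx _ /IH /(_ Hfx) [HxG HAG]; split => //.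
exact: subset_trans (subsetUr _ _) HxG.
Qed.

Lemma gain_le_greedy_choice (G AG : {set 'I_t * V}) x o : G \subset AG ->
  feasible b s T AG ->
  greedy_choice G x ->
  admissible o -> o \notin G -> feasible b s T (o |: G) -> gain AG o <= gain G x.
Proof.
move=> HG HAG xbest Ho noG Hfo.
have HoN : o \in Nset s T by rewrite inE admissible_Wall.
have Hchoice : gain G o <= gain G x by rewrite /gain lerD2r xbest.
have [oAG|noAG] := boolP (o \in AG).
  rewrite /gain (setUidPr (_ : [set o] \subset _)) ?sub1set // subrr.
  by apply: le_trans (gain_ge0 _ Ho) Hchoice.
by apply: le_trans (gain_submod HG (proj1 (andP HAG)) Ho noAG) Hchoice.
Qed.

Lemma greedy_step_exchange (G AG O : {set 'I_t * V}) x :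
  feasible b s T G -> x \notin G -> feasible b s T (x |: G) ->
  x |: G \subset AG -> feasible b s T AG ->
  greedy_choice G x ->
  all_admissible O -> {in O, forall o, o \notin G} ->
  (forall w, load O w + load G w <= b w)%N ->
  exists2 O', [/\ all_admissible O', {in O', forall o, o \notin x |: G}
                & forall w, (load O' w + load (x |: G) w <= b w)%N] &
    \sum_(o in O) gain AG o <= gain G x + \sum_(o in O') gain AG o.
Proof.
move=> HfG nxG Hfx HxAG HAG xbest HO OG Ocap.
(* The element of O charged to the step x: x itself if it is in O, none if
   node x.2 still has spare capacity, and otherwise some o in O at node x.2. *)
have Hx : admissible x by apply: (forall_inP (proj1 (andP Hfx))); rewrite setU11.
have HOD o : all_admissible (O :\ o).
  by apply/forall_inP => p; rewrite in_setD1 => /andP[_]; apply: (forall_inP HO).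
have [xO|nxO] := boolP (x \in O).
  exists (O :\ x).
    split => //.
    - by move=> o'; rewrite in_setD1 in_setU1 negb_or => /andP[-> /OG].
    - by move=> w; rewrite load_setU1 // addnA addnAC -load_setD1.
  rewrite (big_setD1 x xO) /= lerD2r /gain (setUidPr (_ : [set x] \subset _)).
    by rewrite subrr -/(gain G x) gain_ge0.
  by rewrite sub1set (subsetP HxAG) ?setU11.
have OxG : {in O, forall o, o \notin x |: G}.
  by move=> o Ho; rewrite in_setU1 negb_or OG // andbT; apply: contraNneq nxO => <-.
have [slack|tight] := ltnP (load O x.2 + load G x.2) (b x.2).
  exists O; last by rewrite lerDr gain_ge0.
  split => // w; rewrite load_setU1 // addnA.
  by case: eqVneq => [<-|_]; rewrite ?addn1 ?addn0.
have [o Ho Eo] : exists2 o, o \in O & o.2 = x.2.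
  apply: load_gt0; have := feasible_setU1_load nxG Hfx; lia.
exists (O :\ o).
  split => //; first by move=> o' /setD1P[_ /OxG].
  by move=> w; rewrite load_setU1 // -Eo addnA addnAC -load_setD1.
rewrite (big_setD1 o Ho) /= lerD2r; apply: gain_le_greedy_choice => //.
- exact: subset_trans (subsetUr _ _) HxAG.
- exact: (forall_inP HO).
- exact: OG.
- apply: feasible_setU1 HfG (forall_inP HO o Ho) (OG o Ho) _.
  by rewrite Eo; apply: feasible_setU1_load nxG Hfx.
Qed.

Lemma z_le_add_gains (X Y : {set 'I_t * V}) : all_admissible X -> all_admissible Y ->
  z' Y <= z' X + \sum_(o in Y) gain X o.
Proof.
move=> HX HY; have adm_enum (A : {set 'I_t * V}) : all_admissible A -> all admissible (enum A).
  by move=> HA; apply/allP => p; rewrite mem_enum; apply: (forall_inP HA).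
have := z_setU_seq Y (adm_enum X HX); rewrite set_enum setUC => HYX.
have := z_setU_seq_le HX (adm_enum Y HY); rewrite set_enum big_enum /=.
exact: le_trans HYX.
Qed.

Lemma greedy_exchange G xs AG : greedy_from k b s T D G xs AG -> feasible b s T G ->
  forall O, all_admissible O -> {in O, forall o, o \notin G} ->
  (forall w, load O w + load G w <= b w)%N ->
  \sum_(o in O) gain AG o <= z' AG - z' G.
Proof.
elim: xs G => [|x xs IH] G /=.
  case=> -> Gmax HG O HO OG Ocap; rewrite subrr big1 // => o Ho; exfalso.
  have HoN : o \in Nset s T by rewrite inE admissible_Wall ?(forall_inP HO).
  have : feasible b s T (o |: G).
    apply: feasible_setU1 HG (forall_inP HO o Ho) (OG o Ho) _.
    by have := Ocap o.2; rewrite (load_setD1 _ Ho) eqxx; lia.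
  by rewrite (negbTE (Gmax o HoN (OG o Ho))).
case=> _ nxG Hfx xbest Hrest HG O HO OG Ocap.
have [HxAG HAG] := greedy_from_feasible Hrest Hfx.
have [O' [HO' O'G O'cap] Hsum] :=
  greedy_step_exchange HG nxG Hfx HxAG HAG xbest HO OG Ocap.
by have := IH _ Hrest Hfx O' HO' O'G O'cap; rewrite /gain in Hsum; lra.
Qed.

End Assignment.

Theorem theorem3 (R : realFieldType) (V : finType) (E : rel V)
  (k : V -> V -> R) (b : V -> nat) (t : nat) (s : 'I_t -> V)
  (T : 'I_t -> {set V * V}) (D : 'I_t -> {set V}) :
  (forall u v, E u v -> 0 <= k u v) ->
  (forall i, is_outtree E (T i) (s i)) ->
  (forall i, D i \subset tnodes (T i) (s i)) ->
  (forall i x, is_leaf (T i) (s i) x -> x \in D i) ->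
  forall AG : {set 'I_t * V}, greedy_output k b s T D AG ->
  forall A : {set 'I_t * V}, feasible b s T A ->
    z k s T D A / 2 <= z k s T D AG.
Proof.
move=> k_ge0 outtree _ leaf_dest AG [xs greedy_AG] A HA.
have feasible0 := feasible0 b s T.
have [_ HAG] := greedy_from_feasible greedy_AG feasible0.
have A_gains : \sum_(o in A) gain k s T D AG o <= z k s T D AG - z k s T D set0.
  apply: (greedy_exchange k_ge0 outtree leaf_dest greedy_AG feasible0 (proj1 (andP HA))).
    by move=> o _; rewrite inE.
  by move=> w; rewrite load0 addn0; exact: feasible_load w HA.
have := z_le_add_gains k_ge0 outtree leaf_dest (proj1 (andP HAG)) (proj1 (andP HA)).
by move: A_gains; rewrite /Defs.z subrr; lra.
Qed.
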